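(* Let $(X,\|\cdot\|_X)$ be a Banach space and $\mathcal{K}\subset X$ compact. For every $n\ge1$ and every $\gamma>0$, $$d_n^{\gamma^2\mathrm{diam}(\mathcal{K})}(\mathcal{K})_X\le\delta^*_{n,\gamma}(\mathcal{K})_X.$$
   Context: $\mathrm{diam}(\mathcal{K})=\sup_{f,g\in\mathcal{K}}\|f-g\|_X$. The stable manifold width is $\delta^*_{n,\gamma}(\mathcal{K})_X=\inf_{a,M,\|\cdot\|_{Y_n}}\sup_{f\in\mathcal{K}}\|f-M(a(f))\|_X$, the infimum over all norms $\|\cdot\|_{Y_n}$ on $\mathbb{R}^n$ and all maps $a:\mathcal{K}\to(\mathbb{R}^n,\|\cdot\|_{Y_n})$, $M:(\mathbb{R}^n,\|\cdot\|_{Y_n})\to X$ that are both $\gamma$-Lipschitz. For $k\ge1$ and a norm $\|\cdot\|_{Y_k}$ on $\mathbb{R}^k$ let $B_{Y_k}=\{y\in\mathbb{R}^k:\|y\|_{Y_k}\le1\}$; $d^\gamma(\mathcal{K},Y_k)_X=\inf_{\Phi}\sup_{f\in\mathcal{K}}\inf_{y\in B_{Y_k}}\|f-\Phi(y)\|_X$, the infimum over all maps $\Phi:B_{Y_k}\to X$ with $\|\Phi(y)-\Phi(y')\|_X\le\gamma\|y-y'\|_{Y_k}$; and the Lipschitz width is $d_n^\gamma(\mathcal{K})_X=\inf_{1\le k\le n}\inf_{\|\cdot\|_{Y_k}}d^\gamma(\mathcal{K},Y_k)_X$, the inner infimum over all norms on $\mathbb{R}^k$. *)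

From HB Require Import structures.
From mathcomp Require Import all_boot all_order all_algebra.
From mathcomp Require Import all_classical all_reals all_analysis.
Set Implicit Arguments. Unset Strict Implicit. Unset Printing Implicit Defensive.
Import Order.TTheory GRing.Theory Num.Theory.
Import numFieldNormedType.Exports.
Local Open Scope classical_set_scope.
Local Open Scope ring_scope.

Section Widths.
Context {R : realType} {X : normedModType R}.

Definition is_norm (n : nat) (N : 'rV[R]_n -> R) : Prop :=
  [/\ (forall y, 0 <= N y),
      (forall y, N y = 0 -> y = 0),
      (forall (c : R) y, N (c *: y) = `|c| * N y) &
      (forall y y', N (y + y') <= N y + N y')].

(* diam(K) = sup_{f,g in K} ||f - g||, as a real number (finite for a
   nonempty compact K; equal to 0 by convention if K is empty). *)
Definition diam (K : set X) : R :=
  fine (ereal_sup [set e | exists f g, K f /\ K g /\ e = (`|f - g|)%:E]).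

Definition stable_width (K : set X) (n : nat) (gamma : R) : \bar R :=
  ereal_inf [set e | exists (N : 'rV[R]_n -> R) (a : X -> 'rV[R]_n)
                            (M : 'rV[R]_n -> X),
     [/\ is_norm N,
         (forall f g, K f -> K g -> N (a f - a g) <= gamma * `|f - g|),
         (forall y y', `|M y - M y'| <= gamma * N (y - y')) &
         e = ereal_sup [set (`|f - M (a f)|)%:E | f in K]]].

Definition lip_width_Y (k : nat) (N : 'rV[R]_k -> R) (K : set X) (gamma : R)
  : \bar R :=
  ereal_inf [set e | exists Phi : 'rV[R]_k -> X,
     (forall y y', N y <= 1 -> N y' <= 1 ->
        `|Phi y - Phi y'| <= gamma * N (y - y')) /\
     e = ereal_sup [set ereal_inf [set (`|f - Phi y|)%:E | y in [set y | N y <= 1]]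
                   | f in K]].

Definition lip_width (K : set X) (n : nat) (gamma : R) : \bar R :=
  ereal_inf [set e | exists (k : nat) (N : 'rV[R]_k -> R),
     [/\ (1 <= k <= n)%N, is_norm N & e = lip_width_Y N K gamma]].

End Widths.

From HB Require Import structures.
From mathcomp Require Import all_boot all_order all_algebra.
From mathcomp Require Import all_classical all_reals all_analysis.
Import Order.TTheory GRing.Theory Num.Theory.
Import numFieldNormedType.Exports.
Local Open Scope classical_set_scope.
Local Open Scope ring_scope.

(* Given an encoder a and a decoder M, both gamma-Lipschitz, fix f0 in K and
   set Phi y := M (a f0 + gamma diam(K) y).  Phi is gamma^2 diam(K)-Lipschitz,
   and for f in K the code a f - a f0 has norm at most gamma diam(K), so
   M (a f) = Phi y for some y in the unit ball: the Lipschitz map Phi on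
   B_{Y_n} approximates K at least as well as the pair (a, M). *)

Section Diameter.
Context {R : realType} {X : normedModType R}.

Lemma diam_ge0 (K : set X) : 0 <= diam K.
Proof.
rewrite /diam; set S := [set e | _].
have [[f0 Kf0]|K0] := pselect (exists f, K f).
  apply: fine_ge0; apply: le_trans (ereal_sup_ubound _); last by exists f0, f0.
  by rewrite subrr normr0.
have -> : S = set0.
  by apply/seteqP; split => // e [f [g [Kf _]]]; apply: K0; exists f.
by rewrite ereal_sup0.
Qed.

Lemma le_diam (K : set X) f g : bounded_set K -> K f -> K g ->
  `|f - g| <= diam K.
Proof.
move=> [B [_ KB]] Kf Kg.
have KB1 x : K x -> `|x| <= B + 1 by apply: KB; rewrite ltrDl.
rewrite /diam; set S := [set e | _].
have le_sup : (`|f - g|%:E <= ereal_sup S)%E.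
  by apply: ereal_sup_ubound; exists f, g.
have sup_le : (ereal_sup S <= (2 * (B + 1))%:E)%E.
  apply: ge_ereal_sup => _ [x [y [Kx [Ky ->]]]].
  rewrite lee_fin; apply: le_trans (ler_normB _ _) _.
  by rewrite mulr2n mulrDl mul1r lerD ?KB1.
by move: le_sup sup_le; case: (ereal_sup S).
Qed.

End Diameter.

Section Norms.
Context {R : realType} {n : nat} {N : 'rV[R]_n -> R}.
Hypothesis normN : is_norm N.

Lemma is_norm0 : N 0 = 0.
Proof.
by case: normN => _ _ NZ _; have := NZ 0 0; rewrite scale0r normr0 mul0r.
Qed.

Lemma is_norm_scale_ball (c : R) v : 0 <= c -> N v <= c ->
  exists2 y, N y <= 1 & c *: y = v.
Proof.
case: normN => N0 Nz NZ _; have [->|c_neq0] := eqVneq c 0 => c_ge0 Nv_le.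
  exists 0; first by rewrite is_norm0.
  by rewrite scaler0; apply/esym/Nz/le_anti; rewrite Nv_le N0.
have c_gt0 : 0 < c by rewrite lt_def c_neq0.
exists (c^-1 *: v); last by rewrite scalerA mulfV // scale1r.
by rewrite NZ ger0_norm ?invr_ge0 // ler_pdivrMl // mulr1.
Qed.

Lemma lipschitz_comp_affine {X : normedModType R} (M : 'rV_n -> X)
    (gamma c : R) (b : 'rV_n) : 0 <= c ->
  (forall y y', `|M y - M y'| <= gamma * N (y - y')) ->
  forall y y', `|M (b + c *: y) - M (b + c *: y')| <= gamma * c * N (y - y').
Proof.
case: normN => _ _ NZ _ c_ge0 M_lip y y'; apply: le_trans (M_lip _ _) _.
rewrite opprD addrACA subrr add0r -scalerBr NZ ger0_norm //.
by rewrite mulrA.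
Qed.

End Norms.

Lemma lip_width_Y_le_sup {R : realType} {X : normedModType R} {k : nat}
    (N : 'rV[R]_k -> R) (K : set X) (gamma : R) (Phi : 'rV_k -> X)
    (rec : X -> X) :
  (forall y y', N y <= 1 -> N y' <= 1 ->
     `|Phi y - Phi y'| <= gamma * N (y - y')) ->
  (forall f, K f -> exists2 y, N y <= 1 & Phi y = rec f) ->
  (lip_width_Y N K gamma <= ereal_sup [set (`|f - rec f|)%:E | f in K])%E.
Proof.
move=> Phi_lip Phi_onto; apply: le_trans (ereal_inf_lbound _) _.
  by exists Phi; split.
apply: ge_ereal_sup => _ [f Kf <-].
apply: le_trans (ereal_sup_ubound _); last by exists f.
have [y Ny Phiy] := Phi_onto f Kf.
by apply: ereal_inf_lbound; exists y; rewrite ?Phiy.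
Qed.

Theorem theorem6p1 (R : realType) (X : completeNormedModType R) (K : set X)
  (hK : compact K) (n : nat) (hn : (1 <= n)%N) (gamma : R) (hgamma : 0 < gamma) :
  (lip_width K n (gamma ^+ 2 * diam K) <= stable_width K n gamma)%E.
Proof.
have [f0 Kf0] : exists f0 : X, forall f, K f -> K f0.
  have [[f0 ?]|K0] := pselect (exists f, K f); first by exists f0.
  by exists 0 => f Kf; case: K0; exists f.
apply: le_ereal_inf_tmp => _ [N [a [M [normN a_lip M_lip ->]]]].
have c_ge0 : 0 <= gamma * diam K by rewrite mulr_ge0 ?diam_ge0 ?ltW.
pose Phi y := M (a f0 + (gamma * diam K) *: y).
apply: (@le_trans _ _ (lip_width_Y N K (gamma ^+ 2 * diam K))).
  by apply: ereal_inf_lbound; exists n, N; rewrite hn leqnn.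
apply: (lip_width_Y_le_sup N K _ Phi (fun f => M (a f))).
- move=> y y' _ _; rewrite /Phi expr2 -(mulrA gamma gamma).
  exact: lipschitz_comp_affine.
- move=> f Kf.
  have [y Ny cy] :
      exists2 y, N y <= 1 & (gamma * diam K) *: y = a f - a f0.
    apply: is_norm_scale_ball => //.
    apply: le_trans (a_lip _ _ Kf (Kf0 _ Kf)) _; rewrite ler_pM2l //.
    by apply: le_diam => //; [exact: compact_bounded | exact: Kf0 Kf].
  by exists y; rewrite // /Phi cy subrKC.
Qed.
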